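(* Let $G$ be a finite group. Then the commuting graph $\Gamma_C(G)$ is minimally connected if and only if $G$ is abelian.
   Context: The commuting graph $\Gamma_C(G)$ of a group $G$ is the simple undirected graph with vertex set $G$ in which two distinct elements $x,y$ are adjacent if and only if $xy=yx$. For a connected graph $\Gamma$, a vertex cut-set is a set $S$ of vertices such that $\Gamma-S$ is disconnected or has just one vertex, and the vertex connectivity $\kappa(\Gamma)$ is the smallest size of a vertex cut-set. $\Gamma$ is minimally connected if $\kappa(\Gamma-\epsilon)=\kappa(\Gamma)-1$ for every edge $\epsilon$ of $\Gamma$. *)

From mathcomp Require Import all_boot all_fingroup.
Set Implicit Arguments. Unset Strict Implicit. Unset Printing Implicit Defensive.

(* A finite simple graph on a finType T: vertex set V : {set T}, edge set E of
   2-element subsets [set u; v] (u != v) of V. *)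
Section Graphs.
Variable T : finType.

Definition ind_adj (E : {set {set T}}) (W : {set T}) : rel T :=
  fun u v => [&& u \in W, v \in W, u != v & [set u; v] \in E].

Definition gconnected (W : {set T}) (E : {set {set T}}) : bool :=
  [forall x, forall y, (x \in W) ==> (y \in W) ==> connect (ind_adj E W) x y].

Definition is_cutset (V : {set T}) (E : {set {set T}}) (S : {set T}) : bool :=
  (S \subset V) && ((#|V :\: S| == 1) || ~~ gconnected (V :\: S) E).

Definition kappa (V : {set T}) (E : {set {set T}}) : nat :=
  \big[minn/#|V|]_(S : {set T} | is_cutset V E S) #|S|.

Definition minimally_connected (V : {set T}) (E : {set {set T}}) : bool :=
  gconnected V E &&
  [forall e in E, kappa V (E :\ e) == (kappa V E).-1].
End Graphs.

Definition commuting_edges (gT : finGroupType) (G : {set gT}) : {set {set gT}} :=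
  [set [set x; y] | x in G, y in G & (x != y) && (x * y == y * x)%g].

(* If G is abelian the commuting graph is complete: its only cut-sets leave a single
   vertex, so kappa = |G| - 1, and after deleting an edge {x, y} the complement of
   {x, y} becomes the smallest cut-set, so kappa drops to |G| - 2.
   If G is not abelian, some u differs from u^-1, and u, u^-1 are adjacent twins
   (an element commutes with u iff it commutes with u^-1).  Deleting the edge between
   two twins disconnects no induced subgraph except the pair itself, since a common
   neighbour reconnects them; and the complement of the pair has size |G| - 2, which
   is already at least kappa because two non-commuting elements are nonadjacent.
   So deleting {u, u^-1} does not lower kappa > 0, against minimal connectivity. *)

From HB Require Import structures.
From mathcomp Require Import all_boot all_fingroup abelian zify.

Set Implicit Arguments. Unset Strict Implicit. Unset Printing Implicit Defensive.

(* Lets [bigD1] split the minimum defining [kappa]. *)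
HB.instance Definition _ := SemiGroup.isComLaw.Build nat minn minnA minnC.

Section VertexConnectivity.
Variable T : finType.
Implicit Types (V W S : {set T}) (E : {set {set T}}).

Definition complete_on W E := {in W &, forall a b, a != b -> [set a; b] \in E}.

Definition twins_on W E u w :=
  {in W, forall x, x != u -> x != w -> ([set u; x] \in E) = ([set w; x] \in E)}.

Lemma kappa_le_cutset V E S : is_cutset V E S -> kappa V E <= #|S|.
Proof. by move=> cutS; rewrite /kappa (bigD1 S) //= geq_minl. Qed.

Lemma kappa_le_card V E : kappa V E <= #|V|.
Proof.
rewrite /kappa; elim/big_ind: _ => // [m n lemV _|S /andP[sSV _]].
  by rewrite geq_min lemV.
exact: subset_leq_card.
Qed.

Lemma leq_kappa V E m : m <= #|V| ->
  (forall S, is_cutset V E S -> m <= #|S|) -> m <= kappa V E.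
Proof.
move=> lemV lemS; rewrite /kappa; elim/big_ind: _ => // m1 m2 le1 le2.
by rewrite leq_min le1.
Qed.

Lemma ind_adjC E W : symmetric (ind_adj E W).
Proof. by move=> a b; rewrite /ind_adj setUC eq_sym; do 2!case: (_ \in W). Qed.

Lemma ind_adj_setD1 E W e p q :
  ind_adj E W p q -> [set p; q] != e -> ind_adj (E :\ e) W p q.
Proof. by case/and4P=> Wp Wq npq Epq ne; rewrite /ind_adj Wp Wq npq !inE ne. Qed.

Lemma connect_closed_mem (e : rel T) (A : {set T}) x y :
  (forall a b, a \in A -> e a b -> b \in A) -> x \in A -> connect e x y -> y \in A.
Proof.
move=> clA Ax /connectP[p]; elim: p x Ax => [|z p IHp] x Ax /= => [_ -> //|].
by case/andP=> exz; apply: IHp; exact: clA exz.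
Qed.

Lemma gconnected_sub E E' W :
  subrel (ind_adj E W) (connect (ind_adj E' W)) -> gconnected W E -> gconnected W E'.
Proof.
move=> sub /forallP conn; apply/forallP=> x; apply/forallP=> y.
apply/implyP=> Wx; apply/implyP=> Wy; apply: connect_sub sub _ _ _.
by move/forallP: (conn x) => /(_ y); rewrite Wx Wy.
Qed.

Lemma gconnected_complete W E : complete_on W E -> gconnected W E.
Proof.
move=> cW; apply/forallP=> x; apply/forallP=> y; apply/implyP=> Wx; apply/implyP=> Wy.
have [-> //|nxy] := eqVneq x y.
by apply: connect1; rewrite /ind_adj Wx Wy nxy cW.
Qed.

Lemma gconnected_pairN E x y :
  x != y -> [set x; y] \notin E -> ~~ gconnected [set x; y] E.
Proof.
move=> nxy nExy; apply/negP=> /forallP/(_ x)/forallP/(_ y); rewrite set21 set22 /=.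
move=> cxy; suff /set1P yx : y \in [set x] by rewrite yx eqxx in nxy.
apply: (connect_closed_mem _ (set11 x) cxy) => a b /set1P-> /and4P[_].
by case/set2P=> [-> /[!eqxx] | ->] // _ Exy; rewrite Exy in nExy.
Qed.

Lemma twins_outer_neighbour E W u w :
    u \in W -> w \in W -> twins_on W E u w -> W != [set u; w] -> gconnected W E ->
  exists x, [/\ x \in W, x != u, x != w & [set u; x] \in E].
Proof.
move=> Wu Ww tw nW conn.
have [y] : exists y, y \in W :\: [set u; w].
  apply/set0Pn; apply: contra nW; rewrite setD_eq0 => sWuw.
  by rewrite eqEsubset sWuw; apply/subsetP=> z /set2P[]->.
rewrite !inE negb_or => /andP[/andP[yu yw] Wy].
have [x /and4P[]|noN] := pickP [pred x | [&& x \in W, x != u, x != w & [set u; x] \in E]].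
  by exists x.
have : y \in [set u; w].
  have cuy : connect (ind_adj E W) u y.
    by move/forallP: conn => /(_ u)/forallP/(_ y); rewrite Wu Wy.
  apply: (connect_closed_mem _ (set21 _ _) cuy) => a b uwa /and4P[_ Wb _ Eab].
  apply: contraT; rewrite !inE negb_or => /andP[bu bw].
  have := noN b; rewrite /= Wb bu bw /=.
  by case/set2P: uwa Eab => -> Eab; rewrite ?Eab // tw // Eab.
by rewrite !inE (negbTE yu) (negbTE yw).
Qed.

Lemma gconnected_setD_twin_edge E W u w :
    twins_on W E u w -> W != [set u; w] -> gconnected W E ->
  gconnected W (E :\ [set u; w]).
Proof.
move=> tw nW conn; move: (conn); apply: gconnected_sub => p q Epq.
have [puw | npuw] := eqVneq [set p; q] [set u; w]; last exact/connect1/ind_adj_setD1.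
case/and4P: Epq => Wp Wq npq _.
have pq_uw z : z \in [set p; q] -> z \in [set u; w] by rewrite puw.
have uw_pq z : z \in [set u; w] -> z \in W by rewrite -puw => /set2P[]->.
have [Wu Ww] := (uw_pq u (set21 u w), uw_pq w (set22 u w)).
have [x [Wx xu xw Eux]] := twins_outer_neighbour Wu Ww tw nW conn.
have xNuw : x \notin [set u; w] by rewrite !inE negb_or xu.
have cuw : connect (ind_adj (E :\ [set u; w]) W) u w.
  apply: (connect_trans (y := x)); apply/connect1/ind_adj_setD1;
    try by apply: contraNneq xNuw => <-; rewrite !inE eqxx ?orbT.
    by rewrite /ind_adj Wu Wx eq_sym xu Eux.
  by rewrite /ind_adj Wx Ww xw setUC -tw.
have cwu : connect (ind_adj (E :\ [set u; w]) W) w u.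
  by rewrite (sym_connect_sym (ind_adjC _ _)).
move: (pq_uw p (set21 p q)) (pq_uw q (set22 p q)) npq.
by case/set2P=> ->; case/set2P=> ->; rewrite ?eqxx.
Qed.

Lemma kappa_gt0 V E : gconnected V E -> 1 < #|V| -> 0 < kappa V E.
Proof.
move=> conn V_gt1; apply: leq_kappa => [|S /andP[_]]; first exact: ltnW.
rewrite lt0n cards_eq0; apply: contraL => /eqP->.
by rewrite setD0 conn orbF; apply: contraL V_gt1 => /eqP->.
Qed.

Lemma kappa_le_nonadj V E x y : x \in V -> y \in V -> x != y ->
  [set x; y] \notin E -> kappa V E <= #|V| - 2.
Proof.
move=> Vx Vy nxy nExy.
have sxyV : [set x; y] \subset V by apply/subsetP=> z /set2P[]->.
suff cut : is_cutset V E (V :\: [set x; y]).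
  by apply: leq_trans (kappa_le_cutset cut) _; rewrite cardsDS // cards2 nxy.
rewrite /is_cutset subsetDl setDDr setDv set0U (setIidPr sxyV).
by rewrite gconnected_pairN ?orbT.
Qed.

Lemma kappa_setD_twin_edge V E u w : u != w -> twins_on V E u w ->
  kappa V E <= #|V| - 2 -> kappa V E <= kappa V (E :\ [set u; w]).
Proof.
move=> nuw tw kle; apply: leq_kappa => [|S /andP[sSV cutS]]; first exact: kappa_le_card.
have [VS | nVS] := eqVneq (V :\: S) [set u; w].
  have : #|V :\: S| = 2 by rewrite VS cards2 nuw.
  by rewrite cardsDS //; have := subset_leq_card sSV; lia.
apply: kappa_le_cutset; rewrite /is_cutset sSV /=; case/orP: cutS => [-> // | ].
apply: contraNT; rewrite negb_or => /andP[_ /negbNE conn].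
by rewrite gconnected_setD_twin_edge // => z /setDP[Vz _]; exact: tw.
Qed.

Lemma kappa_complete V E : complete_on V E -> 0 < #|V| -> kappa V E = #|V|.-1.
Proof.
move=> cV /card_gt0P[v Vv]; apply/eqP; rewrite eqn_leq; apply/andP; split.
  have cut : is_cutset V E (V :\ v).
    by rewrite /is_cutset subsetDl setDDr setDv set0U (setIidPr _) ?sub1set ?cards1.
  by apply: leq_trans (kappa_le_cutset cut) _; rewrite (cardsD1 v V) Vv.
apply: leq_kappa => [|S /andP[sSV /orP[]]]; first exact: leq_pred.
  by rewrite cardsDS // => /eqP; lia.
by rewrite gconnected_complete //; apply: sub_in2 cV => z /setDP[].
Qed.

Lemma kappa_complete_setD_edge V E x y : complete_on V E ->
  x \in V -> y \in V -> x != y -> kappa V (E :\ [set x; y]) = #|V| - 2.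
Proof.
move=> cV Vx Vy nxy; apply/eqP; rewrite eqn_leq (kappa_le_nonadj Vx Vy) ?setD11 //=.
apply: leq_kappa => [|S /andP[sSV cutS]]; first exact: leq_subr.
have sSV' := subset_leq_card sSV.
apply: contraTT cutS; rewrite -ltnNge => small.
have W_gt2 : 2 < #|V :\: S| by rewrite cardsDS //; lia.
have nW : V :\: S != [set x; y].
  by apply: contraTneq W_gt2 => ->; rewrite cards2 nxy.
have conn : gconnected (V :\: S) (E :\ [set x; y]).
  apply: gconnected_setD_twin_edge nW _ => [z /setDP[Vz _] zx zy|].
    by rewrite !cV // 1?eq_sym.
  by apply/gconnected_complete/(sub_in2 _ cV) => z /setDP[].
by rewrite negb_or conn andbT; apply: contraTneq W_gt2 => ->.
Qed.

End VertexConnectivity.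

Section CommutingGraph.
Variables (gT : finGroupType) (G : {group gT}).
Implicit Types x y u : gT.
Local Open Scope group_scope.

Lemma mem_commuting_edges x y : x != y ->
  ([set x; y] \in commuting_edges G) = [&& x \in G, y \in G & x * y == y * x].
Proof.
move=> nxy; apply/imset2P/and3P => [[a b Ga] | [Gx Gy cxy]]; last first.
  by exists x y; rewrite // inE Gy nxy.
rewrite inE => /and3P[Gb nab cab] xy_ab.
have xab : x \in [set a; b] by rewrite -xy_ab set21.
have yab : y \in [set a; b] by rewrite -xy_ab set22.
case/set2P: xab yab nxy => -> /set2P[]-> _ //; rewrite ?eqxx //.
by split; rewrite // eq_sym.
Qed.

Lemma commuting_edges_complete : abelian G -> complete_on G (commuting_edges G).
Proof.
move=> abG x y Gx Gy nxy; rewrite mem_commuting_edges // Gx Gy.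
by apply/eqP/(centsP abG).
Qed.

Lemma commuting_edges_twinsV u : twins_on G (commuting_edges G) u u^-1.
Proof.
move=> x Gx xu xuV; rewrite eq_sym in xu; rewrite eq_sym in xuV.
rewrite !mem_commuting_edges // groupV.
have cV v : v * x == x * v -> v^-1 * x == x * v^-1.
  by move/eqP=> cvx; apply/eqP/commute_sym/commuteV/commute_sym.
congr [&& _, _ & _]; apply/idP/idP => [/cV // | /cV]; by rewrite invgK.
Qed.

Lemma not_abelian_noncommuting :
  ~~ abelian G -> exists x y, [/\ x \in G, y \in G & x * y != y * x].
Proof.
move=> nabG; have [[x y] /= /and3P[Gx Gy nc] | all_c] :=
  pickP [pred p : gT * gT | [&& p.1 \in G, p.2 \in G & p.1 * p.2 != p.2 * p.1]].
  by exists x, y.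
case/negP: nabG; apply/centsP => x Gx y Gy; apply/eqP.
by have := all_c (x, y); rewrite /= Gx Gy => /negbFE.
Qed.

Lemma not_abelian_noninvolution : ~~ abelian G -> exists2 u, u \in G & u != u^-1.
Proof.
move=> nabG; have [u /andP[Gu nuV] | all_inv] := pickP [pred u | (u \in G) && (u != u^-1)].
  by exists u.
case/negP: nabG; apply/abelem_abelian/exponent2_abelem/exponentP => u Gu.
have := all_inv u; rewrite /= Gu => /negbFE/eqP uV.
by rewrite expg2 {1}uV mulVg.
Qed.

End CommutingGraph.

Theorem mainTheorem8 (gT : finGroupType) (G : {group gT}) :
  minimally_connected G (commuting_edges G) <-> abelian G.
Proof.
set E := commuting_edges G.
split=> [/andP[conn /forall_inP minE] | abG].
  apply: contraT => nabG.
  have [x [y [Gx Gy nc]]] := not_abelian_noncommuting nabG.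
  have [u Gu nuV] := not_abelian_noninvolution nabG.
  have nxy : x != y by apply: contraNneq nc => ->.
  have kE_le : kappa G E <= #|G| - 2.
    by apply: (kappa_le_nonadj Gx Gy nxy); rewrite mem_commuting_edges // Gx Gy.
  have kE_gt0 : 0 < kappa G E.
    by apply: (kappa_gt0 conn); apply/card_gt1P; exists u, u^-1%g; rewrite groupV.
  have Euu : [set u; u^-1%g] \in E.
    by rewrite mem_commuting_edges // groupV Gu mulgV mulVg eqxx.
  have := kappa_setD_twin_edge nuV (@commuting_edges_twinsV _ G u) kE_le.
  by rewrite -/E (eqP (minE _ Euu)); lia.
have cE := commuting_edges_complete abG.
apply/andP; split; first exact: gconnected_complete.
apply/forall_inP=> e /imset2P[x y Gx]; rewrite inE => /andP[Gy /andP[nxy _]] ->.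
by rewrite (kappa_complete_setD_edge cE) // (kappa_complete cE) ?cardG_gt0 // subn2.
Qed.
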